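(* Let $V$ be a real vector space of dimension $m=p+q\ge 3$ equipped with a non-degenerate symmetric inner product $(\cdot,\cdot)$ of signature $(p,q)$ (arbitrary), let $R$ be an algebraic curvature tensor on $V$, and let $1\le k\le m-1$. If $R$ is $k$ Osserman, then $\mathcal{J}_R(x)$ is nilpotent for every complex null vector $x\in\mathcal{N}$.
   Context: An algebraic curvature tensor is $R\in\otimes^4V^*$ with $R(x,y,z,w)=R(z,w,x,y)=-R(y,x,z,w)$ and $R(x,y,z,w)+R(y,z,x,w)+R(z,x,y,w)=0$. The Jacobi operator $\mathcal{J}_R(x)$ is the linear map of $V$ defined by $(\mathcal{J}_R(x)y,w)=R(y,x,x,w)$. For a non-degenerate $k$-dimensional subspace $\sigma\subset V$ with orthonormal basis $\{e_1,\dots,e_k\}$, the higher order Jacobi operator is $\mathcal{J}_R(\sigma)=\sum_{i=1}^k (e_i,e_i)\mathcal{J}_R(e_i)$ (independent of the orthonormal basis). $R$ is called $k$ Osserman if the eigenvalues of $\mathcal{J}_R(\sigma)$ are constant on the Grassmannian of non-degenerate $k$-planes $\sigma\subset V$. The inner product, $R$ and $\mathcal{J}_R$ are extended complex-multilinearly to $V_{\mathbb{C}}=V\otimes\mathbb{C}$; $\mathcal{N}=\{v\in V_{\mathbb{C}}:(v,v)=0\}$ is the set of complex null vectors. A linear map $A$ of $V_{\mathbb{C}}$ is nilpotent if $A^m=0$, equivalently $\operatorname{trace}(A^i)=0$ for $1\le i\le m$. *)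

From HB Require Import structures.
From mathcomp Require Import all_boot all_order all_algebra.
From mathcomp Require Import reals.
From mathcomp.real_closed Require Import complex.
Set Implicit Arguments. Unset Strict Implicit. Unset Printing Implicit Defensive.
Import Order.TTheory GRing.Theory Num.Theory.
Local Open Scope ring_scope.

(* V = F^m as column vectors 'cV[F]_m, with the symmetric bilinear form
   (u, w) = u^T G w given by a Gram matrix G. Everything is defined over an arbitrary field F so that it can be
   used both over the reals and (after complexification) over R[i]. *)

Section Defs.
Variable F : fieldType.
Variable m : nat.

Definition ip (G : 'M[F]_m) (u w : 'cV[F]_m) : F := (u^T *m G *m w) 0 0.

Definition tensor4 := 'I_m -> 'I_m -> 'I_m -> 'I_m -> F.

Definition tform (T : tensor4) (x y z w : 'cV[F]_m) : F :=
  \sum_(i < m) \sum_(j < m) \sum_(k < m) \sum_(l < m)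
     T i j k l * x i 0 * y j 0 * z k 0 * w l 0.

Definition is_alg_curv (T : tensor4) : Prop :=
  (forall x y z w, tform T x y z w = tform T z w x y) /\
  (forall x y z w, tform T x y z w = - tform T y x z w) /\
  (forall x y z w, tform T x y z w + tform T y z x w + tform T z x y w = 0).

(* Jacobi operator: the matrix J (acting y |-> J *m y) characterised by
   (J y, w) = R(y, x, x, w); explicitly J = G^{-1} N^T with
   N j l = R(e_j, x, x, e_l). *)
Definition jacobi (G : 'M[F]_m) (T : tensor4) (x : 'cV[F]_m) : 'M[F]_m :=
  invmx G *m (\matrix_(j < m, l < m)
                 tform T (delta_mx j 0) x x (delta_mx l 0))^T.

Definition orthonormal (G : 'M[F]_m) (k : nat) (e : 'I_k -> 'cV[F]_m) : Prop :=
  forall i j : 'I_k,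
    ip G (e i) (e j) = (if i == j then ip G (e i) (e i) else 0) /\
    (ip G (e i) (e i) = 1 \/ ip G (e i) (e i) = -1).

Definition hjacobi (G : 'M[F]_m) (T : tensor4) (k : nat) (e : 'I_k -> 'cV[F]_m)
  : 'M[F]_m := \sum_(i < k) ip G (e i) (e i) *: jacobi G T (e i).

Definition nilpotent (A : 'M[F]_m) : Prop := A ^+ m = 0.
End Defs.

Section Complex.
Variable R : realType.
Variable m : nat.
Local Open Scope complex_scope.

Definition cplx (r : R) : R[i] := r%:C.
Definition cG (G : 'M[R]_m) : 'M[R[i]]_m := map_mx cplx G.
Definition cT (T : tensor4 R m) : tensor4 R[i] m := fun i j k l => cplx (T i j k l).

Definition eigenvalues (A : 'M[R]_m) : pred R[i] :=
  fun z => root (char_poly (map_mx cplx A)) z.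

(* R is k Osserman: the eigenvalues of J_R(sigma) are the same for all
   non-degenerate k-planes sigma (given by orthonormal bases) *)
Definition k_osserman (G : 'M[R]_m) (T : tensor4 R m) (k : nat) : Prop :=
  forall e f : 'I_k -> 'cV[R]_m, orthonormal G e -> orthonormal G f ->
    eigenvalues (hjacobi G T e) =1 eigenvalues (hjacobi G T f).

Definition cnull (G : 'M[R]_m) (x : 'cV[R[i]]_m) : Prop := ip (cG G) x x = 0.
End Complex.

(* Reflecting an orthonormal k-frame [e] in the hyperplane orthogonal to a
   non-null real vector [w] gives another orthonormal frame, whose higher order
   Jacobi operator is [(w, w)^-2 M(w)] with [M] polynomial in [w]. By the
   k Osserman hypothesis it has the eigenvalues of [J(e)], so by Cayley-Hamilton
   [H(w) := q^N d(q^-1 M(w))] vanishes, where [q = (w, w)^2] and [d] is a power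
   (of degree [N]) of the characteristic polynomial of [J(e)]. As [H] is
   polynomial in [w], [(w, w) H(w)] vanishes identically on the complexification,
   and a line argument shows [H(x) = 0] for every complex null [x] as well.
   There [q = 0] and [M(x) = 4 (sum_l (e_l, e_l) (e_l, x)^2) J(x)], so
   [H(x) = M(x)^N] forces [J(x)] to be nilpotent as soon as the scalar factor is
   nonzero; choosing the frame inside an orthonormal basis achieves this for
   every [x <> 0]. *)

From HB Require Import structures.
From mathcomp Require Import all_boot order ssralg ssrnum poly polydiv matrix mxalgebra mxpoly.
From mathcomp Require Import zmodp fingroup perm.
From mathcomp Require Import reals.
From mathcomp.real_closed Require Import complex.
From mathcomp Require Import ring.
From Stdlib Require Import Classical.
Set Implicit Arguments. Unset Strict Implicit. Unset Printing Implicit Defensive.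
Import Order.TTheory GRing.Theory Num.Theory.
Local Open Scope ring_scope.

Section BilinearForm.
Variables (F : fieldType) (m : nat).
Implicit Types (G : 'M[F]_m) (u v w x y : 'cV[F]_m).

Lemma ipDl G u v w : ip G (u + v) w = ip G u w + ip G v w.
Proof. by rewrite /ip linearD /= !mulmxDl mxE. Qed.

Lemma ipDr G u v w : ip G w (u + v) = ip G w u + ip G w v.
Proof. by rewrite /ip mulmxDr mxE. Qed.

Lemma ipZl G a u w : ip G (a *: u) w = a * ip G u w.
Proof. by rewrite /ip linearZ /= -!scalemxAl mxE. Qed.

Lemma ipZr G a u w : ip G w (a *: u) = a * ip G w u.
Proof. by rewrite /ip -scalemxAr mxE. Qed.

Lemma ipBl G u v w : ip G (u - v) w = ip G u w - ip G v w.
Proof. by rewrite ipDl -scaleN1r ipZl mulN1r. Qed.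

Lemma ipBr G u v w : ip G w (u - v) = ip G w u - ip G w v.
Proof. by rewrite ipDr -scaleN1r ipZr mulN1r. Qed.

Lemma ip0r G w : ip G w 0 = 0.
Proof. by rewrite -(scale0r 0) ipZr mul0r. Qed.

Lemma ip_sumr G w (I : Type) (r : seq I) (P : pred I) (f : I -> 'cV[F]_m) :
  ip G w (\sum_(i <- r | P i) f i) = \sum_(i <- r | P i) ip G w (f i).
Proof. exact: (big_morph _ (fun u v => ipDr G u v w) (ip0r G w)). Qed.

Lemma ipC G u w : G^T = G -> ip G u w = ip G w u.
Proof.
have tr11 (A : 'M[F]_1) : A 0 0 = A^T 0 0 by rewrite mxE.
by move=> sG; rewrite /ip tr11 !trmx_mul trmxK sG mulmxA.
Qed.

Lemma ip_nondegl G x : G \in unitmx -> (forall v, ip G x v = 0) -> x = 0.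
Proof.
move=> uG x_orth; apply: trmx_inj; rewrite trmx0 -(mulmxK uG x^T).
suff -> : x^T *m G = 0 by rewrite mul0mx.
apply/rowP => j; have := x_orth (delta_mx j 0).
by rewrite /ip -colE !mxE => ->.
Qed.

Lemma tformZ T a x y z w :
  tform T x (a *: y) (a *: z) w = a ^+ 2 * tform T x y z w.
Proof.
rewrite /tform mulr_sumr; apply: eq_bigr => i _; rewrite mulr_sumr.
apply: eq_bigr => j _; rewrite mulr_sumr; apply: eq_bigr => k _.
rewrite mulr_sumr; apply: eq_bigr => l _; rewrite !mxE; ring.
Qed.

Lemma jacobiZ G T a x : jacobi G T (a *: x) = a ^+ 2 *: jacobi G T x.
Proof.
rewrite /jacobi scalemxAr -linearZ /=; congr (_ *m _^T).
by apply/matrixP => i j; rewrite !mxE tformZ.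
Qed.

Lemma jacobi0 G T : jacobi G T 0 = 0.
Proof. by rewrite -(scale0r (0 : 'cV[F]_m)) jacobiZ expr0n scale0r. Qed.

End BilinearForm.

Lemma exists_nonnull_on_line (F : numFieldType) m (G : 'M[F]_m) w b :
  G^T = G -> ip G w w = 0 -> ip G b b != 0 ->
  exists t : F, ip G (w + t *: b) (w + t *: b) != 0.
Proof.
move=> sG ww0 bb_neq0.
have qE t : ip G (w + t *: b) (w + t *: b) = t * (2 * ip G w b + t * ip G b b).
  by rewrite !(ipDl, ipDr, ipZl, ipZr) ww0 (ipC b w sG); ring.
have [h|h] := eqVneq (2 * ip G w b + ip G b b) 0; last by exists 1; rewrite qE !mul1r.
exists 2; rewrite qE mulf_neq0 ?pnatr_eq0 //.
have -> : 2 * ip G w b + 2 * ip G b b = 2 * ip G w b + ip G b b + ip G b b by ring.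
by rewrite h add0r.
Qed.

Section Reflection.
Variables (F : fieldType) (m k : nat) (G : 'M[F]_m) (T : tensor4 F m).
Implicit Types (e : 'I_k -> 'cV[F]_m) (w x y : 'cV[F]_m).

Definition reflection w x := x - (2 * ip G x w / ip G w w) *: w.

(* [(w, w)^2 J(reflection w \o e)] (see [hjacobi_reflection]): clearing the
   denominators makes it polynomial in [w] and meaningful for null [w]. *)
Definition hjacobi_refl_scaled e w :=
  \sum_(l < k) ip G (e l) (e l) *:
    jacobi G T (ip G w w *: e l - (2 * ip G (e l) w) *: w).

Lemma ip_reflection w x y : G^T = G -> ip G w w != 0 ->
  ip G (reflection w x) (reflection w y) = ip G x y.
Proof.
move=> sG ww_neq0; rewrite /reflection !(ipBl, ipBr, ipZl, ipZr) (ipC w y sG).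
by field.
Qed.

Lemma orthonormal_reflection e w : G^T = G -> ip G w w != 0 ->
  orthonormal G e -> orthonormal G (reflection w \o e).
Proof. by move=> sG ww_neq0 eON i j /=; rewrite !ip_reflection //; apply: eON. Qed.

Lemma hjacobi_reflection e w : G^T = G -> ip G w w != 0 ->
  hjacobi G T (reflection w \o e) = (ip G w w ^+ 2)^-1 *: hjacobi_refl_scaled e w.
Proof.
move=> sG ww_neq0; rewrite /hjacobi scaler_sumr; apply: eq_bigr => l _ /=.
rewrite ip_reflection // [RHS]scalerA mulrC -exprVn -[RHS]scalerA.
rewrite -(jacobiZ G T) /reflection scalerBr !scalerA mulVf // scale1r.
by rewrite [_^-1 * _]mulrC.
Qed.

Lemma hjacobi_refl_scaled_null e w : ip G w w = 0 ->
  hjacobi_refl_scaled e w =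
  (4 * \sum_(l < k) ip G (e l) (e l) * ip G (e l) w ^+ 2) *: jacobi G T w.
Proof.
move=> ww0; rewrite /hjacobi_refl_scaled mulr_sumr scaler_suml.
apply: eq_bigr => l _; rewrite ww0 scale0r sub0r -scaleNr jacobiZ scalerA.
by congr (_ *: _); ring.
Qed.

End Reflection.

Section PolyOnLines.
Variables (F : comNzRingType) (V : lmodType F).

Definition poly_on_lines (f : V -> F) :=
  forall a b : V, exists p : {poly F}, forall t, f (a + t *: b) = p.[t].

Definition poly_on_lines_mx r c (A : V -> 'M[F]_(r, c)) :=
  forall i j, poly_on_lines (fun w => A w i j).

Lemma eq_poly_on_lines (f g : V -> F) :
  f =1 g -> poly_on_lines g -> poly_on_lines f.
Proof. by move=> eq_fg g_pol a b; have [p Hp] := g_pol a b; exists p => t; rewrite eq_fg. Qed.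

Lemma poly_on_lines_cst c : poly_on_lines (fun=> c).
Proof. by move=> a b; exists c%:P => t; rewrite hornerC. Qed.

Lemma poly_on_linesM f g :
  poly_on_lines f -> poly_on_lines g -> poly_on_lines (fun w => f w * g w).
Proof.
move=> f_pol g_pol a b; have [p Hp] := f_pol a b; have [q Hq] := g_pol a b.
by exists (p * q) => t; rewrite hornerM Hp Hq.
Qed.

Lemma poly_on_linesX f n : poly_on_lines f -> poly_on_lines (fun w => f w ^+ n).
Proof.
move=> f_pol; elim: n => [|n IH]; first exact: poly_on_lines_cst.
by apply: eq_poly_on_lines (poly_on_linesM f_pol IH) => w; rewrite exprS.
Qed.

Lemma poly_on_lines_sum I (r : seq I) (P : pred I) (f : I -> V -> F) :
  (forall i, poly_on_lines (f i)) ->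
  poly_on_lines (fun w => \sum_(i <- r | P i) f i w).
Proof.
move=> f_pol a b; elim: r => [|i r [p IH]].
  by exists 0 => t; rewrite big_nil horner0.
have [q Hq] := f_pol i a b; exists (if P i then q + p else p) => t.
by rewrite big_cons; case: (P i); rewrite ?hornerD ?Hq IH.
Qed.

Lemma eq_poly_on_lines_mx r c (A B : V -> 'M[F]_(r, c)) :
  A =1 B -> poly_on_lines_mx B -> poly_on_lines_mx A.
Proof. by move=> eq_AB B_pol i j; apply: eq_poly_on_lines (B_pol i j) => w; rewrite eq_AB. Qed.

Lemma poly_on_lines_mx_cst r c (A : 'M[F]_(r, c)) : poly_on_lines_mx (fun=> A).
Proof. by move=> i j; apply: poly_on_lines_cst. Qed.

Lemma poly_on_lines_matrix r c (f : 'I_r -> 'I_c -> V -> F) :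
  (forall i j, poly_on_lines (f i j)) ->
  poly_on_lines_mx (fun w => \matrix_(i, j) f i j w).
Proof. by move=> f_pol i j; apply: eq_poly_on_lines (f_pol i j) => w; rewrite mxE. Qed.

Lemma poly_on_lines_mxB r c (A B : V -> 'M[F]_(r, c)) :
  poly_on_lines_mx A -> poly_on_lines_mx B -> poly_on_lines_mx (fun w => A w - B w).
Proof.
move=> A_pol B_pol i j a b; have [p Hp] := A_pol i j a b.
have [q Hq] := B_pol i j a b.
by exists (p - q) => t; rewrite !mxE hornerD hornerN Hp Hq.
Qed.

Lemma poly_on_lines_mxZ r c (s : V -> F) (A : V -> 'M[F]_(r, c)) :
  poly_on_lines s -> poly_on_lines_mx A -> poly_on_lines_mx (fun w => s w *: A w).
Proof.
move=> s_pol A_pol i j.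
by apply: eq_poly_on_lines (poly_on_linesM s_pol (A_pol i j)) => w; rewrite mxE.
Qed.

Lemma poly_on_lines_tr r c (A : V -> 'M[F]_(r, c)) :
  poly_on_lines_mx A -> poly_on_lines_mx (fun w => (A w)^T).
Proof. by move=> A_pol i j; apply: eq_poly_on_lines (A_pol j i) => w; rewrite mxE. Qed.

Lemma poly_on_lines_mx_sum r c I (s : seq I) (P : pred I)
    (A : I -> V -> 'M[F]_(r, c)) :
  (forall i, poly_on_lines_mx (A i)) ->
  poly_on_lines_mx (fun w => \sum_(i <- s | P i) A i w).
Proof.
move=> A_pol i j; apply: eq_poly_on_lines (poly_on_lines_sum s P (fun l => A_pol l i j)).
by move=> w; rewrite summxE.
Qed.

Lemma poly_on_lines_mxM r c d (A : V -> 'M[F]_(r, c)) (B : V -> 'M[F]_(c, d)) :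
  poly_on_lines_mx A -> poly_on_lines_mx B -> poly_on_lines_mx (fun w => A w *m B w).
Proof.
move=> A_pol B_pol i j.
apply: eq_poly_on_lines (poly_on_lines_sum (index_enum _) xpredT
  (fun l => poly_on_linesM (A_pol i l) (B_pol l j))) => w.
by rewrite mxE.
Qed.

Lemma poly_on_lines_mxX n (A : V -> 'M[F]_n) k :
  poly_on_lines_mx A -> poly_on_lines_mx (fun w => A w ^+ k).
Proof.
move=> A_pol; elim: k => [|k IH]; first exact: poly_on_lines_mx_cst.
by apply: eq_poly_on_lines_mx (poly_on_lines_mxM A_pol IH) => w; rewrite exprS.
Qed.

End PolyOnLines.

Section PolyOnLinesForm.
Variables (F : fieldType) (m : nat).
Implicit Types (G : 'M[F]_m) (T : tensor4 F m) (X Y : 'cV[F]_m -> 'cV[F]_m).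

Lemma poly_on_lines_id : poly_on_lines_mx (fun w : 'cV[F]_m => w).
Proof.
move=> i j a b; exists ((a i j)%:P + b i j *: 'X) => t.
by rewrite !mxE hornerD hornerC hornerZ hornerX mulrC.
Qed.

Lemma poly_on_lines_ip G X Y :
  poly_on_lines_mx X -> poly_on_lines_mx Y -> poly_on_lines (fun w => ip G (X w) (Y w)).
Proof.
move=> X_pol Y_pol; apply: poly_on_lines_mxM Y_pol 0 0.
exact: poly_on_lines_mxM (poly_on_lines_tr X_pol) (poly_on_lines_mx_cst G).
Qed.

Lemma poly_on_lines_jacobi G T X :
  poly_on_lines_mx X -> poly_on_lines_mx (fun w => jacobi G T (X w)).
Proof.
move=> X_pol; apply: poly_on_lines_mxM; first exact: poly_on_lines_mx_cst.
apply/poly_on_lines_tr/poly_on_lines_matrix => j l.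
do 4!apply: poly_on_lines_sum => ?.
apply: poly_on_linesM; last exact: poly_on_lines_cst.
do 2!(apply: poly_on_linesM; last exact: X_pol).
exact: poly_on_lines_cst.
Qed.

Lemma poly_on_lines_hjacobi_refl_scaled k G T (e : 'I_k -> 'cV[F]_m) :
  poly_on_lines_mx (hjacobi_refl_scaled G T e).
Proof.
have ww_pol := poly_on_lines_ip G poly_on_lines_id poly_on_lines_id.
apply: poly_on_lines_mx_sum => l; apply: poly_on_lines_mxZ; first exact: poly_on_lines_cst.
apply/poly_on_lines_jacobi/poly_on_lines_mxB; apply: poly_on_lines_mxZ.
- exact: ww_pol.
- exact: poly_on_lines_mx_cst.
- apply: poly_on_linesM; first exact: poly_on_lines_cst.
  exact: poly_on_lines_ip (poly_on_lines_mx_cst _) poly_on_lines_id.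
- exact: poly_on_lines_id.
Qed.

End PolyOnLinesForm.

Section VanishingOnNaturals.
Variable F : numDomainType.

Lemma poly_eq0_on_nat (p : {poly F}) : (forall k : nat, p.[k%:R] = 0) -> p = 0.
Proof.
move=> p_nat; apply/eqP; apply: contraT => p_neq0.
have roots : all (root p) [seq (k%:R : F) | k <- iota 0 (size p)].
  by apply/allP => _ /mapP[k _ ->]; rewrite /root p_nat.
have uniq_roots : uniq [seq (k%:R : F) | k <- iota 0 (size p)].
  by rewrite map_inj_uniq ?iota_uniq // => i j /eqP; rewrite eqr_nat => /eqP.
by have := max_poly_roots p_neq0 roots uniq_roots; rewrite size_map size_iota ltnn.
Qed.

Lemma poly_on_lines_nat_eq0 m (f : 'cV[F]_m -> F) :
  poly_on_lines f -> (forall v : 'I_m -> nat, f (\col_i (v i)%:R) = 0) ->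
  forall w, f w = 0.
Proof.
move=> f_pol f_nat.
(* Free the coordinates one at a time: along a coordinate line [f] is a
   polynomial vanishing at all naturals. *)
suff nat_tail r : (r <= m)%N -> forall (v : 'I_m -> nat) (w : 'cV[F]_m),
    (forall j : 'I_m, (r <= j)%N -> w j 0 = (v j)%:R) -> f w = 0.
  by move=> w; apply: (nat_tail m (leqnn m) (fun=> 0%N)) => j; rewrite leqNgt ltn_ord.
elim: r => [_ v w w_nat | r IH lt_rm v w w_nat].
  by rewrite -(f_nat v); congr f; apply/colP => j; rewrite mxE w_nat.
pose jr := Ordinal lt_rm; pose b : 'cV[F]_m := delta_mx jr 0.
have [p Hp] := f_pol (w - w jr 0 *: b) b.
suff p0 : p = 0 by rewrite -[w](subrK (w jr 0 *: b)) Hp p0 horner0.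
apply: poly_eq0_on_nat => k; rewrite -Hp.
apply: (IH (ltnW lt_rm) (fun j => if j == jr then k else v j)) => j le_rj.
rewrite !mxE; have [->|ne_jjr] := eqVneq j jr; first by rewrite !mulr1 subrr add0r.
by rewrite /= !mulr0 subr0 addr0 w_nat // ltn_neqAle le_rj andbT eq_sym.
Qed.

Lemma poly_on_lines_mul_eq0 (V : lmodType F) (f g : V -> F) w0 b t :
  poly_on_lines f -> poly_on_lines g -> (forall w, f w * g w = 0) ->
  f (w0 + t *: b) != 0 -> g w0 = 0.
Proof.
move=> f_pol g_pol fg0 ft_neq0; have [p Hp] := f_pol w0 b; have [q Hq] := g_pol w0 b.
have /eqP : p * q = 0 by apply: poly_eq0_on_nat => k; rewrite hornerM -Hp -Hq.
rewrite mulf_eq0 => /orP[/eqP p0 | /eqP q0]; first by rewrite Hp p0 horner0 eqxx in ft_neq0.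
by rewrite -[w0]addr0 -(scale0r b) Hq q0 horner0.
Qed.

End VanishingOnNaturals.

Lemma horner_mx_coef (F : comNzRingType) n (A : 'M[F]_n.+1) (p : {poly F}) :
  horner_mx A p = \sum_(i < size p) p`_i *: A ^+ i.
Proof.
rewrite -{1}(coefK p) poly_def rmorph_sum; apply: eq_bigr => i _.
rewrite -mul_polyC rmorphM rmorphXn /= horner_mx_C horner_mx_X.
by rewrite -mulmxE mul_scalar_mx.
Qed.

Section HomogeneousHorner.
Variables (F : fieldType) (n : nat).
Implicit Types (d : {poly F}) (q : F) (M : 'M[F]_n.+1).

Definition homog_horner d q M :=
  \sum_(i < size d) (d`_i * q ^+ ((size d).-1 - i)) *: M ^+ i.

Lemma homog_hornerE d q M : q != 0 ->
  homog_horner d q M = q ^+ (size d).-1 *: horner_mx (q^-1 *: M) d.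
Proof.
move=> q_neq0; rewrite horner_mx_coef scaler_sumr; apply: eq_bigr => i _.
rewrite exprZn !scalerA exprVn; congr (_ *: _).
have le_iN : (i <= (size d).-1)%N.
  by rewrite -ltnS prednK // (leq_ltn_trans (leq0n _) (ltn_ord i)).
by rewrite expfB_cond ?(negbTE q_neq0) // mulrA [d`_i * _]mulrC.
Qed.

Lemma homog_horner0 d M : d \is monic -> homog_horner d 0 M = M ^+ (size d).-1.
Proof.
move=> d_monic; rewrite /homog_horner.
have -> : size d = (size d).-1.+1 by rewrite prednK // size_poly_gt0 monic_neq0.
rewrite big_ord_recr /= big1 ?add0r => [|i _].
  by rewrite subnn expr0 mulr1 -lead_coefE (monicP d_monic) scale1r.
by rewrite expr0n subn_eq0 leqNgt ltn_ord /= mulr0 scale0r.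
Qed.

End HomogeneousHorner.

Lemma poly_on_lines_homog_horner (F : fieldType) n (V : lmodType F) d
    (q : V -> F) (M : V -> 'M[F]_n.+1) :
  poly_on_lines q -> poly_on_lines_mx M ->
  poly_on_lines_mx (fun w => homog_horner d (q w) (M w)).
Proof.
move=> q_pol M_pol; apply: poly_on_lines_mx_sum => i.
apply: poly_on_lines_mxZ (poly_on_lines_mxX _ M_pol).
by apply: poly_on_linesM; [apply: poly_on_lines_cst | apply: poly_on_linesX].
Qed.

Section CharacteristicRoots.
Variables (F : closedFieldType) (n : nat).
Implicit Types (B : 'M[F]_n.+1) (c : {poly F}).

Lemma horner_mx_char_roots B c :
  {subset root (char_poly B) <= root c} -> horner_mx B (c ^+ n.+1) = 0.
Proof.
move=> char_roots_c.
have [rs char_B] := closed_field_poly_normal (char_poly B).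
rewrite (monicP (char_poly_monic B)) scale1r in char_B.
have size_rs : size rs = n.+1.
  by have := size_char_poly B; rewrite char_B size_prod_XsubC => -[].
have rs_roots : all (root c) rs.
  by apply/allP => z z_rs; apply: char_roots_c; rewrite -topredE /= char_B root_prod_XsubC.
have /dvdpP[g ->] : char_poly B %| c ^+ n.+1.
  rewrite char_B -size_rs; elim: rs rs_roots {char_B size_rs} => [|z rs IH] /=.
    by rewrite big_nil dvd1p.
  by case/andP=> cz rs_roots; rewrite big_cons exprS dvdp_mul ?dvdp_XsubCl ?IH.
by rewrite rmorphM /= Cayley_Hamilton mulr0.
Qed.

Lemma char_poly_root_nilpotent B N z :
  B ^+ N = 0 -> root (char_poly B) z -> z = 0.
Proof.
move=> BN0; have min_dvd : mxminpoly B %| 'X ^+ N.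
  by apply: mxminpoly_min; rewrite rmorphXn /= horner_mx_X.
rewrite -root_mxminpoly => /(root_dvdp min_dvd).
by rewrite /root hornerXn expf_eq0 => /andP[_ /eqP].
Qed.

Lemma mx_nilpotent_bound B N : B ^+ N = 0 -> B ^+ n.+1 = 0.
Proof.
move=> BN0; have := @horner_mx_char_roots B 'X.
rewrite rmorphXn /= horner_mx_X; apply=> z /(char_poly_root_nilpotent BN0) ->.
by rewrite -topredE /= /root hornerX.
Qed.

End CharacteristicRoots.

Section Complexification.
Variables (R : realType) (m : nat).
Local Notation cv := (map_mx (@cplx R)).
Implicit Types (G : 'M[R]_m) (T : tensor4 R m) (u w x y z : 'cV[R]_m).

HB.instance Definition _ := GRing.RMorphism.copy (@cplx R) (real_complex R).

Lemma cG_sym G : G^T = G -> (cG G)^T = cG G.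
Proof. by move=> sG; rewrite /cG map_trmx sG. Qed.

Lemma ip_cplx G u w : ip (cG G) (cv u) (cv w) = cplx (ip G u w).
Proof. by rewrite /ip /cG map_trmx -!map_mxM mxE. Qed.

Lemma tform_cplx T x y z w :
  tform (cT T) (cv x) (cv y) (cv z) (cv w) = cplx (tform T x y z w).
Proof.
rewrite /tform rmorph_sum; apply: eq_bigr => i _; rewrite rmorph_sum.
apply: eq_bigr => j _; rewrite rmorph_sum; apply: eq_bigr => k _.
by rewrite rmorph_sum; apply: eq_bigr => l _; rewrite !rmorphM !mxE.
Qed.

Lemma jacobi_cplx G T x : jacobi (cG G) (cT T) (cv x) = cv (jacobi G T x).
Proof.
rewrite /jacobi map_mxM map_invmx -map_trmx; congr (_ *m _^T).
apply/matrixP => i j; rewrite !mxE.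
by have := tform_cplx T (delta_mx i 0) x x (delta_mx j 0); rewrite !map_delta_mx.
Qed.

Lemma orthonormal_cplx k G (e : 'I_k -> 'cV[R]_m) :
  orthonormal G e -> orthonormal (cG G) (cv \o e).
Proof.
move=> eON i j; rewrite /= !ip_cplx; have [-> e_ii] := eON i j.
split; first by case: (i == j); rewrite ?rmorph0.
by case: e_ii => ->; [left; rewrite rmorph1 | right; rewrite rmorphN1].
Qed.

Lemma hjacobi_refl_scaled_cplx k G T (e : 'I_k -> 'cV[R]_m) w :
  cv (hjacobi_refl_scaled G T e w) =
  hjacobi_refl_scaled (cG G) (cT T) (cv \o e) (cv w).
Proof.
rewrite /hjacobi_refl_scaled map_mx_sum; apply: eq_bigr => l _ /=.
rewrite map_mxZ -jacobi_cplx !ip_cplx map_mxB !map_mxZ rmorphM rmorph_nat.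
by [].
Qed.

End Complexification.

Section Orthonormal.
Variables (F : fieldType) (n : nat) (G : 'M[F]_n).

Lemma orthonormal_sqr k (e : 'I_k -> 'cV[F]_n) i :
  orthonormal G e -> ip G (e i) (e i) ^+ 2 = 1.
Proof. by move=> eON; have [_ [->|->]] := eON i i; rewrite ?sqrrN expr1n. Qed.

Lemma orthonormal_nonnull k (e : 'I_k -> 'cV[F]_n) i :
  orthonormal G e -> ip G (e i) (e i) != 0.
Proof. by move=> eON; have [_ [->|->]] := eON i i; rewrite ?oppr_eq0 oner_eq0. Qed.

Lemma orthonormal_inj k k' (e : 'I_k -> 'cV[F]_n) (phi : 'I_k' -> 'I_k) :
  injective phi -> orthonormal G e -> orthonormal G (e \o phi).
Proof. by move=> phi_inj eON i j /=; rewrite -(inj_eq phi_inj); apply: eON. Qed.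

Lemma orthonormal_orth_eq0 (e : 'I_n -> 'cV[F]_n) w :
  orthonormal G e -> (forall i, ip G (e i) w = 0) -> w = 0.
Proof.
move=> eON w_orth; pose E := \matrix_(a, i) e i a 0.
have EGE i j : (E^T *m G *m E) i j = ip G (e i) (e j).
  rewrite /ip !mxE; apply: eq_bigr => b _; rewrite !mxE; congr (_ * _).
  by apply: eq_bigr => a _; rewrite !mxE.
have [EG_unit _] : E^T *m G \in unitmx /\ E \in unitmx.
  apply/andP; rewrite -unitmx_mul; apply: (proj1 (@mulmx1_unit _ _ _ (E^T *m G *m E) _)).
  apply/matrixP => i j; rewrite !mxE (bigD1 i) //= big1 => [|l ne_li]; last first.
    by rewrite EGE (proj1 (eON i l)) eq_sym (negbTE ne_li) mul0r.
  rewrite !EGE addr0 (proj1 (eON i j)); case: eqP => _; last by rewrite mulr0.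
  by rewrite -expr2 orthonormal_sqr.
rewrite -(mulKmx EG_unit w); suff -> : E^T *m G *m w = 0 by rewrite mulmx0.
apply/colP => i; rewrite [RHS]mxE -(w_orth i) /ip !mxE.
apply: eq_bigr => b _; congr (_ * _); rewrite !mxE.
by apply: eq_bigr => a _; rewrite !mxE.
Qed.

Lemma span_card_ge r (e : 'I_r -> 'cV[F]_n) (c : 'I_r -> 'cV[F]_n -> F) :
  (forall v, v = \sum_i c i v *: e i) -> (n <= r)%N.
Proof.
move=> e_span; pose E : 'M_(n, r) := \matrix_(a, i) e i a 0.
pose X : 'M_(r, n) := \matrix_(i, b) c i (delta_mx b 0).
rewrite -[n in (n <= _)%N](mxrank1 F n).
have -> : 1%:M = E *m X.
  apply/matrixP => a b; have := congr1 (fun v : 'cV[F]_n => v a 0) (e_span (delta_mx b 0)).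
  rewrite !mxE eqxx andbT => ->; rewrite summxE.
  by apply: eq_bigr => i _; rewrite !mxE mulrC.
by apply: leq_trans (mxrankM_maxl E X) (rank_leq_col E).
Qed.

End Orthonormal.

Section GramSchmidt.
Variables (R : rcfType) (n : nat) (G : 'M[R]_n).
Hypotheses (sG : G^T = G) (uG : G \in unitmx).

Lemma exists_nonnull_orthogonal r (e : 'I_r -> 'cV[R]_n) :
  (r < n)%N -> orthonormal G e ->
  exists2 g, forall i, ip G (e i) g = 0 & ip G g g != 0.
Proof.
move=> lt_rn eON; pose c i v := ip G (e i) (e i) * ip G (e i) v.
pose P v := v - \sum_i c i v *: e i.
have P_orth v i : ip G (e i) (P v) = 0.
  rewrite ipBr ip_sumr (bigD1 i) //= big1 => [|j ne_ji]; last first.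
    by rewrite ipZr (proj1 (eON i j)) eq_sym (negbTE ne_ji) mulr0.
  by rewrite ipZr mulrAC -expr2 orthonormal_sqr // mul1r addr0 subrr.
have PD v v' : P (v + v') = P v + P v'.
  rewrite /P -addrACA -opprD -big_split /=; congr (_ - _).
  by apply: eq_bigr => i _; rewrite /c ipDr mulrDr scalerDl.
(* Otherwise the complement [P] would be totally isotropic by polarization,
   hence zero by nondegeneracy, and the [r < n] vectors [e] would span. *)
apply: NNPP => no_g.
have P_null v : ip G (P v) (P v) = 0.
  by apply/eqP; apply: contraT => P_nonnull; case: no_g; exists (P v).
have P_orthP v v' : ip G (P v) (P v') = 0.
  have := P_null (v + v'); rewrite PD ipDl 2!ipDr !P_null add0r addr0.
  by rewrite (ipC (P v') _ sG) -mulr2n => /eqP; rewrite mulrn_eq0 /= => /eqP.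
have P_eq0 v : P v = 0.
  apply: (ip_nondegl uG) => x; rewrite -[x](subrK (\sum_i c i x *: e i)) -/(P x).
  rewrite ipDr P_orthP add0r ip_sumr big1 // => i _.
  by rewrite ipZr (ipC _ _ sG) P_orth mulr0.
have := @span_card_ge _ _ _ e c (fun v => subr0_eq (P_eq0 v)).
by rewrite leqNgt lt_rn.
Qed.

Lemma exists_unit_orthogonal r (e : 'I_r -> 'cV[R]_n) :
  (r < n)%N -> orthonormal G e ->
  exists2 h, forall i, ip G (e i) h = 0 & ip G h h = 1 \/ ip G h h = -1.
Proof.
move=> lt_rn eON; have [g g_orth g_nonnull] := exists_nonnull_orthogonal lt_rn eON.
have s_neq0 : Num.sqrt `|ip G g g| != 0 by rewrite sqrtr_eq0 -ltNge normr_gt0.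
exists ((Num.sqrt `|ip G g g|)^-1 *: g) => [i|]; first by rewrite ipZr g_orth mulr0.
rewrite ipZl ipZr mulrA -expr2 exprVn sqr_sqrtr ?normr_ge0 //.
case: ltrgt0P g_nonnull => [q_gt0|q_lt0|] // _.
  by left; rewrite mulVf // gt_eqF.
by right; rewrite invrN mulNr mulVf // lt_eqF.
Qed.

Lemma orthonormal_extend r (e : 'I_r -> 'cV[R]_n) h :
  orthonormal G e -> (forall i, ip G (e i) h = 0) -> ip G h h = 1 \/ ip G h h = -1 ->
  orthonormal G (fun i : 'I_r.+1 => if unlift ord_max i is Some j then e j else h).
Proof.
move=> eON h_orth h_unit i j.
case: unliftP => [i'|] ->; case: unliftP => [j'|] ->; rewrite ?liftK ?unlift_none.
- by rewrite (inj_eq lift_inj); apply: eON.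
- by rewrite h_orth eq_sym (negbTE (neq_lift _ _)); split=> //; case: (eON i' i').
- by rewrite (ipC _ _ sG) h_orth (negbTE (neq_lift _ _)).
- by rewrite eqxx.
Qed.

Lemma orthonormal_basis_exists : exists e : 'I_n -> 'cV[R]_n, orthonormal G e.
Proof.
suff basis_of_size r : (r <= n)%N -> exists e : 'I_r -> 'cV[R]_n, orthonormal G e.
  exact: basis_of_size.
elim: r => [_|r IH lt_rn]; first by exists (fun=> 0) => -[].
have [e eON] := IH (ltnW lt_rn); have [h h_orth h_unit] := exists_unit_orthogonal lt_rn eON.
by eexists; apply: orthonormal_extend h_orth h_unit.
Qed.

End GramSchmidt.

(* Comparing the sums for [s] and for [s] composed with a transposition shows
   that otherwise [a] would be constant, and then [k a = 0]. *)
Lemma exists_perm_partial_sum_neq0 (F : numDomainType) m k (lt_km : (k < m)%N)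
    (a : 'I_m -> F) j :
  (0 < k)%N -> a j != 0 ->
  exists s : 'S_m, \sum_(l < k) a (s (widen_ord (ltnW lt_km) l)) != 0.
Proof.
move=> k_gt0 aj_neq0; apply/existsP; apply: contraLR aj_neq0 => /existsPn all0.
have sum0 (s : 'S_m) : \sum_(l < k) a (s (widen_ord (ltnW lt_km) l)) = 0.
  by have /negPn/eqP := all0 s.
pose l0 := Ordinal k_gt0; pose i0 := widen_ord (ltnW lt_km) l0; pose ik := Ordinal lt_km.
have i0_ik : i0 != ik by rewrite -val_eqE /= eq_sym -lt0n.
have swap (s : 'S_m) : a (s i0) = a (s ik).
  have := etrans (sum0 (tperm i0 ik * s)%g) (esym (sum0 s)).
  rewrite (bigD1 l0) // [RHS](bigD1 l0) //=.
  rewrite permM tpermL (eq_bigr (fun l => a (s (widen_ord (ltnW lt_km) l)))).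
    by move/addIr ->.
  move=> l ne_l0; rewrite permM tpermD // -val_eqE /=; last by rewrite gtn_eqF.
  by rewrite eq_sym; exact: ne_l0.
have a_const x : a x = a ik.
  have [->|ne_xik] := eqVneq x ik; first by [].
  by have := swap (tperm i0 x); rewrite tpermL tpermD // eq_sym.
have := sum0 1%g; under eq_bigr do rewrite perm1 a_const.
rewrite sumr_const card_ord => /eqP; rewrite mulrn_eq0 eqn0Ngt k_gt0 /= => /eqP aik0.
by rewrite negbK a_const aik0.
Qed.

Section OssermanNullJacobi.
Variables (R : realType) (n k : nat).
Local Notation m := n.+1.
Local Notation cv := (map_mx (@cplx R)).
Variables (G : 'M[R]_m) (T : tensor4 R m) (e : 'I_k -> 'cV[R]_m).
Hypotheses (sG : G^T = G) (kOss : k_osserman G T k).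
Hypotheses (eON : orthonormal G e) (k_gt0 : (0 < k)%N).

Let d := char_poly (cv (hjacobi G T e)) ^+ m.
Let Q (w : 'cV[R[i]]_m) := ip (cG G) w w.
Let H w := homog_horner d (Q w ^+ 2) (hjacobi_refl_scaled (cG G) (cT T) (cv \o e) w).

Lemma homog_horner_real r : ip G r r != 0 -> H (cv r) = 0.
Proof.
move=> rr_neq0; pose B := cv (hjacobi G T (reflection G r \o e)).
have B_roots : {subset root (char_poly B) <= root (char_poly (cv (hjacobi G T e)))}.
  have rON := orthonormal_reflection sG rr_neq0 eON.
  move=> z Bz; have Bz' : eigenvalues (hjacobi G T (reflection G r \o e)) z by [].
  by rewrite (kOss rON eON z) in Bz'.
have Q_neq0 : Q (cv r) != 0 by rewrite /Q ip_cplx fmorph_eq0.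
rewrite /H homog_hornerE ?expf_neq0 //.
have -> : Q (cv r) ^- 2 *: hjacobi_refl_scaled (cG G) (cT T) (cv \o e) (cv r) = B.
  by rewrite /B hjacobi_reflection // map_mxZ hjacobi_refl_scaled_cplx fmorphV rmorphXn /Q ip_cplx.
by rewrite (horner_mx_char_roots B_roots) scaler0.
Qed.

Lemma homog_horner_null w : Q w = 0 -> H w = 0.
Proof.
move=> w_null; apply/matrixP => i j; rewrite [RHS]mxE.
pose b := cv (e (Ordinal k_gt0)).
have b_nonnull : Q b != 0.
  by rewrite /Q ip_cplx fmorph_eq0 orthonormal_nonnull.
have [t Qt_neq0] := exists_nonnull_on_line (cG_sym sG) w_null b_nonnull.
have Q_pol : poly_on_lines Q.
  exact: poly_on_lines_ip (@poly_on_lines_id _ _) (@poly_on_lines_id _ _).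
have H_pol : poly_on_lines (fun w => H w i j).
  exact: poly_on_lines_homog_horner (poly_on_linesX _ Q_pol)
    (poly_on_lines_hjacobi_refl_scaled _ _ _) i j.
apply: (poly_on_lines_mul_eq0 Q_pol H_pol _ Qt_neq0).
apply: (poly_on_lines_nat_eq0 (poly_on_linesM Q_pol H_pol)) => v.
have -> : \col_l (v l)%:R = cv (\col_l (v l)%:R) by apply/colP => l; rewrite !mxE rmorph_nat.
have [rr0|rr_neq0] := eqVneq (ip G (\col_l (v l)%:R) (\col_l (v l)%:R)) 0.
  by rewrite /Q ip_cplx rr0 rmorph0 mul0r.
by rewrite homog_horner_real // mxE mulr0.
Qed.

Lemma jacobi_null_nilpotent w : Q w = 0 ->
  \sum_(l < k) ip (cG G) (cv (e l)) (cv (e l)) * ip (cG G) (cv (e l)) w ^+ 2 != 0 ->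
  jacobi (cG G) (cT T) w ^+ m = 0.
Proof.
move=> w_null c_neq0; have := homog_horner_null w_null.
rewrite /H w_null expr2 mul0r homog_horner0 ?monic_exp ?char_poly_monic //.
rewrite hjacobi_refl_scaled_null // exprZn => /eqP.
rewrite scaler_eq0 expf_eq0 mulf_eq0 pnatr_eq0 (negbTE c_neq0) andbF => /eqP.
exact: mx_nilpotent_bound.
Qed.

End OssermanNullJacobi.

Theorem theorem1p1 (R : realType) (m : nat) (G : 'M[R]_m) (T : tensor4 R m)
    (k : nat) :
  (2 < m)%N -> G^T = G -> G \in unitmx -> is_alg_curv T ->
  (1 <= k)%N -> (k <= m - 1)%N ->
  k_osserman G T k ->
  forall x : 'cV[R[i]]_m, cnull G x -> nilpotent (jacobi (cG G) (cT T) x).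
Proof.
case: m G T => [//|n] G T _ sG uG _ k_gt0 le_k_n kOss x x_null.
have lt_km : (k < n.+1)%N by move: le_k_n; rewrite subn1.
have [e eON] := orthonormal_basis_exists sG uG.
have eON_C := orthonormal_cplx eON.
have [-> | x_neq0] := eqVneq x 0; first by rewrite /nilpotent jacobi0 expr0n.
pose a j := ip (cG G) (map_mx (@cplx R) (e j)) (map_mx (@cplx R) (e j)) *
  ip (cG G) (map_mx (@cplx R) (e j)) x ^+ 2.
have [j aj_neq0] : exists j, a j != 0.
  apply/existsP; apply: contraNT x_neq0 => /existsPn a0; apply/eqP.
  apply: (orthonormal_orth_eq0 eON_C) => j; apply/eqP.
  by move/negPn: (a0 j); rewrite mulf_eq0 sqrf_eq0 (negbTE (orthonormal_nonnull j eON_C)).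
have [s sum_neq0] := exists_perm_partial_sum_neq0 lt_km k_gt0 aj_neq0.
have phi_inj : injective (s \o widen_ord (ltnW lt_km)).
  apply: inj_comp; first exact: perm_inj.
  by move=> l l' [] /ord_inj.
exact: jacobi_null_nilpotent sG kOss (orthonormal_inj phi_inj eON) k_gt0 x x_null sum_neq0.
Qed.
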